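(* Fix $t\in(0,1)$ and let $A\in\{0,1\}^{n\times n}$. Suppose $\widehat{Y}$ is the unique optimal solution of the convex program $$\max_{Y\in\mathbb{R}^{n\times n}}\ c_{A}\sum_{(i,j):a_{ij}=1}y_{ij}-c_{A^c}\sum_{(i,j):a_{ij}=0}y_{ij}-48\sqrt{n}\,\|Y\|_*\quad\text{s.t. } 0\le y_{ij}\le 1\ \ \forall i,j,$$ with input $A$, where $c_{A}=\sqrt{(1-t)/t}$ and $c_{A^c}=\sqrt{t/(1-t)}$. Let $\widetilde{A}\in\{0,1\}^{n\times n}$ be obtained from $A$ by (a) choosing some pairs $(i,j)$ with $\widehat{y}_{ij}=1$ and $a_{ij}=0$ and setting $\widetilde{a}_{ij}=1$, and (b) choosing some pairs $(i,j)$ with $\widehat{y}_{ij}=0$ and $a_{ij}=1$ and setting $\widetilde{a}_{ij}=0$ (all other entries unchanged). Then $\widehat{Y}$ is also the unique optimal solution of the same program with $\widetilde{A}$ as input.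
   Context: $\|Y\|_*$ denotes the nuclear norm (sum of singular values). The sums run over ordered pairs $(i,j)\in\{1,\dots,n\}^2$, including diagonal pairs. The paper states this lemma in the setting of the stochastic blockmodel with in-cluster edge density $p$ larger than cross-cluster density $q$ ($p>q$), although the program itself depends only on $A$ and $t$. *)

From HB Require Import structures.
From mathcomp Require Import all_boot all_order all_algebra.
From mathcomp Require Import boolp classical_sets reals.
Set Implicit Arguments. Unset Strict Implicit. Unset Printing Implicit Defensive.
Import Order.TTheory GRing.Theory Num.Theory.
Local Open Scope ring_scope.

Definition singular_values {R : realType} {n : nat} (Y : 'M[R]_n) (s : seq R) : Prop :=
  [/\ size s = n, all (fun x => 0 <= x) s &
      char_poly (Y^T *m Y) = \prod_(x <- s) ('X - (x ^+ 2)%:P)].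

Definition nuclear_norm {R : realType} {n : nat} (Y : 'M[R]_n) : R :=
  \sum_(x <- xget [::] (singular_values Y)) x.

Definition feasible {R : realType} {n : nat} (Y : 'M[R]_n) : Prop :=
  forall i j, 0 <= Y i j <= 1.

Definition objective {R : realType} (t : R) {n : nat} (A : 'M[bool]_n) (Y : 'M[R]_n) : R :=
  Num.sqrt ((1 - t) / t) * (\sum_(i < n) \sum_(j < n | A i j) Y i j)
  - Num.sqrt (t / (1 - t)) * (\sum_(i < n) \sum_(j < n | ~~ A i j) Y i j)
  - 48 * Num.sqrt (n%:R) * nuclear_norm Y.

Definition unique_optimum {R : realType} (t : R) {n : nat} (A : 'M[bool]_n) (Yh : 'M[R]_n) : Prop :=
  feasible Yh /\
  forall Y : 'M[R]_n, feasible Y -> Y <> Yh -> objective t A Y < objective t A Yh.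

From HB Require Import structures.
From mathcomp Require Import all_boot all_order all_algebra.
From mathcomp Require Import boolp classical_sets reals.
From mathcomp Require Import ring.
Import Order.TTheory GRing.Theory Num.Theory.
Local Open Scope ring_scope.

(* The objective is linear in Y with entry weight depending only on a_ij,
   minus the nuclear-norm penalty, which does not see A at all.  Flipping an
   entry towards the value of Yhat there changes the weight so that, for any
   feasible Y, the linear part of objective(Y) - objective(Yhat) can only
   decrease; hence the strict optimality gap of Yhat survives the change. *)

Definition weight {R : realType} (t : R) (a : bool) : R :=
  if a then Num.sqrt ((1 - t) / t) else - Num.sqrt (t / (1 - t)).

Lemma weight_false_le_true {R : realType} (t : R) : weight t false <= weight t true.
Proof.
by rewrite /weight (le_trans _ (sqrtr_ge0 _)) // oppr_le0 sqrtr_ge0.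
Qed.

Lemma objectiveE {R : realType} (t : R) n (A : 'M[bool]_n) (Y : 'M[R]_n) :
  objective t A Y = \sum_(i < n) \sum_(j < n) weight t (A i j) * Y i j
                    - 48 * Num.sqrt n%:R * nuclear_norm Y.
Proof.
rewrite /objective; congr (_ - _).
rewrite !mulr_sumr -sumrN -big_split /=; apply: eq_bigr => i _.
rewrite !big_mkcond /= !mulr_sumr -sumrN [X in _ + X]big_mkcond -big_split /=.
by apply: eq_bigr => j _; rewrite /weight; case: (A i j); rewrite !(mulr0, oppr0, addr0, add0r, mulNr).
Qed.

Lemma objectiveB {R : realType} (t : R) n (A : 'M[bool]_n) (Y Yh : 'M[R]_n) :
  objective t A Y - objective t A Yh =
    \sum_(i < n) \sum_(j < n) weight t (A i j) * (Y i j - Yh i j)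
    - 48 * Num.sqrt n%:R * (nuclear_norm Y - nuclear_norm Yh).
Proof.
under [in RHS]eq_bigr do under eq_bigr do rewrite mulrBr.
under [in RHS]eq_bigr do rewrite sumrB.
by rewrite sumrB !objectiveE; ring.
Qed.

Lemma weight_flip_gap_le {R : realType} (t y yh : R) (a a' : bool) :
  0 <= y <= 1 ->
  (a = false /\ yh = 1 /\ a' = true) \/ (a = true /\ yh = 0 /\ a' = false) ->
  weight t a' * (y - yh) <= weight t a * (y - yh).
Proof.
move=> /andP[y_ge0 y_le1] [[-> [-> ->]] | [-> [-> ->]]].
  by rewrite ler_wnM2r ?weight_false_le_true // subr_le0.
by rewrite ler_wpM2r ?weight_false_le_true // subr0.
Qed.

Theorem lemma1 (R : realType) (t : R) (n : nat) (A At : 'M[bool]_n) (Yh : 'M[R]_n) :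
  0 < t < 1 ->
  unique_optimum t A Yh ->
  (forall i j, At i j <> A i j ->
     (A i j = false /\ Yh i j = 1 /\ At i j = true) \/
     (A i j = true /\ Yh i j = 0 /\ At i j = false)) ->
  unique_optimum t At Yh.
Proof.
(* [weight t false <= weight t true] holds for every [t]. *)
move=> _ [feas_Yh opt_Yh] flips; split=> // Y feas_Y Y_neq.
have gap_le : objective t At Y - objective t At Yh <= objective t A Y - objective t A Yh.
  rewrite !objectiveB lerD2r; apply: ler_sum => i _; apply: ler_sum => j _.
  have [-> // | /eqP flipped] := eqVneq (At i j) (A i j).
  exact: weight_flip_gap_le (feas_Y i j) (flips i j flipped).
rewrite -subr_lt0 (le_lt_trans gap_le) // subr_lt0.
exact: opt_Yh.
Qed.
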